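(* For $A=\mathbb Z\times\mathbb Z_2$ the Tamanoi type equation fails. Concretely, $\zeta^{(A)}_{({\rm pt},\{e\})}(t)=1+t+2t^2+O(t^3)$, $\zeta^{(A)}_{({\rm pt},\mathbb Z_2)}(t)=1+2t+4t^2+O(t^3)$ and $\chi^{(A)}({\rm pt},\mathbb Z_2)=2$, so that $\zeta^{(A)}_{({\rm pt},\mathbb Z_2)}(t)\neq\left(\zeta^{(A)}_{({\rm pt},\{e\})}(t)\right)^{\chi^{(A)}({\rm pt},\mathbb Z_2)}$.
   Context: For a finitely generated group $A$ and finite group $G$ acting on the one-point space ${\rm pt}$, $\chi^{(A)}({\rm pt},G)=|{\rm Hom}(A,G)|/|G|$. $G_n=G\wr S_n=G^n\rtimes S_n$ is the wreath product (multiplication $((g_i),s)((g'_i),s')=((g_ig'_{s^{-1}(i)}),ss')$), and $\zeta^{(A)}_{({\rm pt},G)}(t)=1+\sum_{n\ge1}\chi^{(A)}({\rm pt},G_n)t^n$. For a finitely generated $A$, the Tamanoi type equation is said to hold if there is a power series $Z_A(t)\in1+t\mathbb Q[[t]]$ such that for every finite group $G$ and every $G$-invariant union $X$ of cells of a finite $G$-CW-complex, $1+\sum_{n\ge1}\chi^{(A)}(X^n,G_n)t^n=Z_A(t)^{\chi^{(A)}(X,G)}$, where $\chi^{(A)}(X,G)=\frac1{|G|}\sum_{\varphi\in{\rm Hom}(A,G)}\chi(X^{\varphi(A)})$ with $\chi$ the Euler characteristic with compact support, $G_n$ acting on $X^n$ by $((g_i),s)(x_i)=(g_ix_{s^{-1}(i)})$,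 and $f^c=\exp(c\log f)$; necessarily $Z_A=\zeta^{(A)}_{({\rm pt},\{e\})}$. *)

From HB Require Import structures.
From mathcomp Require Import all_boot all_order all_algebra all_fingroup.
From mathcomp Require Import boolp.
Set Implicit Arguments. Unset Strict Implicit. Unset Printing Implicit Defensive.
Import GRing.Theory Num.Theory.

(* A = Z x Z_2, represented by the additive group int * 'Z_2.             *)

Definition isHomA (T : Type) (mul : T -> T -> T) (f : int * 'Z_2 -> T) : Prop :=
  forall (a1 a2 : int) (b1 b2 : 'Z_2),
    f ((a1 + a2)%R, (b1 + b2)%R) = mul (f (a1, b1)) (f (a2, b2)).

(* Hom(A, T), identified (injectively, since (1,0) and (0,1) generate A)
   with the set of pairs (f(1,0), f(0,1)) for homomorphisms f. *)
Definition HomA (T : finType) (mul : T -> T -> T) : {set T * T} :=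
  [set p : T * T | `[< exists f : int * 'Z_2 -> T,
        [/\ isHomA mul f, f (1%R, 0%R) = p.1 & f (0%R, 1%R) = p.2] >] ].

Definition chiA_gen (T : finType) (mul : T -> T -> T) : rat :=
  (#|HomA mul|%:R / #|T|%:R)%R.

Definition chiA (gT : finGroupType) : rat := chiA_gen (@mulg gT).

(* Wreath product G_n = G^n x| S_n with                                   *)
(*   ((g_i), s) ((g'_i), s') = ((g_i g'_{s^{-1}(i)}), s s')               *)
(* where s s' is composition of maps (first s', then s); in MathComp's     *)
(* perm group (s' * s) x = s (s' x), so s \o s' is  s' * s.               *)

Definition wreath (gT : finGroupType) (n : nat) : finType :=
  ({ffun 'I_n -> gT} * {perm 'I_n})%type.

Definition wreath_mul (gT : finGroupType) (n : nat)
    (x y : wreath gT n) : wreath gT n :=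
  ([ffun i => (x.1 i * y.1 ((x.2)^-1 i))%g], (y.2 * x.2)%g).

Definition chiA_wreath (gT : finGroupType) (n : nat) : rat :=
  chiA_gen (@wreath_mul gT n).

Definition fps := nat -> rat.

Definition fps_one : fps := fun n => if n is 0 then 1%R else 0%R.
Definition fps_add (f g : fps) : fps := fun n => (f n + g n)%R.
Definition fps_scale (c : rat) (f : fps) : fps := fun n => (c * f n)%R.
Definition fps_mul (f g : fps) : fps :=
  fun n => (\sum_(i < n.+1) f i * g (n - i)%N)%R.
Fixpoint fps_pow (f : fps) (k : nat) : fps :=
  if k is k'.+1 then fps_mul f (fps_pow f k') else fps_one.

Definition fps_nc (f : fps) : fps := fun n => if n is 0 then 0%R else f n.

(* log f = sum_{k>=1} (-1)^{k+1} (f - 1)^k / k, for f(0) = 1;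
   the n-th coefficient only involves k <= n. *)
Definition fps_log (f : fps) : fps :=
  fun n => (\sum_(1 <= k < n.+1)
              ((-1) ^+ k.+1 / k%:R) * fps_pow (fps_nc f) k n)%R.

Definition fps_exp (g : fps) : fps :=
  fun n => (\sum_(0 <= k < n.+1) (k`!%:R)^-1 * fps_pow (fps_nc g) k n)%R.

Definition fps_powr (f : fps) (c : rat) : fps :=
  fps_exp (fps_scale c (fps_log f)).

Definition zetaA (gT : finGroupType) : fps :=
  fun n => if n is 0 then 1%R else chiA_wreath gT n.

(* A homomorphism Z x Z_2 -> G is determined by a commuting pair (a, b) with b^2 = 1, so
   |Hom(A, G)| counts such pairs.  The wreath products G_1, G_2 for G = {e}, Z_2 are
   {e}, Z_2 = S_2, Z_2 and Z_2 wr S_2 = D_8, with 1, 4, 4 and 32 such pairs, which gives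
   zeta_e = 1 + t + 2t^2 + ..., zeta_{Z_2} = 1 + 2t + 4t^2 + ... and chi(pt, Z_2) = 2.
   The t^2-coefficient of Z^c is c (Z_2 - Z_1^2/2) + c^2 Z_1^2/2; taking G = {e}
   (where chi = 1) forces Z = zeta_e up to t^2, and then Z^2 has t^2-coefficient
   5 <> 4. *)
From HB Require Import structures.
From mathcomp Require Import all_boot all_order all_algebra all_fingroup.
From mathcomp Require Import boolp.
From mathcomp Require Import ring.
Import GRing.Theory Num.Theory.

Section HomATransport.
Context {T U : finType} {mulT : T -> T -> T} {mulU : U -> U -> U}.

Lemma leq_card_HomA (phi : T -> U) :
  injective phi -> {morph phi : x y / mulT x y >-> mulU x y} ->
  #|HomA mulT| <= #|HomA mulU|.
Proof.
move=> phi_inj phiM; pose phi2 (p : T * T) := (phi p.1, phi p.2).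
have phi2_inj : injective phi2 by move=> [x1 x2] [y1 y2] [/phi_inj -> /phi_inj ->].
rewrite -(card_imset _ phi2_inj); apply: subset_leq_card.
apply/subsetP => _ /imsetP [[x y] + ->]; rewrite !inE => /asboolP [f [fM f1 f2]].
apply/asboolP; exists (phi \o f); split; last by rewrite /= f2.
- by move=> a1 a2 b1 b2 /=; rewrite fM phiM.
- by rewrite /= f1.
Qed.

Lemma card_HomA_trivial : #|T| = 1 -> #|HomA mulT| = 1.
Proof.
move=> T1; have /eqP/card1P [x Tx] := T1.
have allx y : y = x by apply/eqP; rewrite -[_ == _]Tx.
apply/eqP; rewrite eqn_leq; apply/andP; split.
  by apply: leq_trans (max_card _) _; rewrite card_prod T1.
apply/card_gt0P; exists (x, x); rewrite inE; apply/asboolP.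
by exists (fun=> x); split=> // *; rewrite -(allx (mulT x x)).
Qed.

End HomATransport.

Lemma card_HomA_iso {T U : finType} {mulT : T -> T -> T} {mulU : U -> U -> U}
    (phi : T -> U) (psi : U -> T) :
  cancel phi psi -> cancel psi phi -> {morph phi : x y / mulT x y >-> mulU x y} ->
  #|HomA mulT| = #|HomA mulU|.
Proof.
move=> phiK psiK phiM; apply/eqP; rewrite eqn_leq.
rewrite (leq_card_HomA phi (can_inj phiK) phiM) (leq_card_HomA psi (can_inj psiK)) //.
by move=> x y; apply: (can_inj phiK); rewrite phiM !psiK.
Qed.

Local Open Scope group_scope.

Definition Z_Z2_gens (gT : finGroupType) : {set gT * gT} :=
  [set p | (p.1 * p.2 == p.2 * p.1) && (p.2 * p.2 == 1)].

Section HomAGroup.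
Variable gT : finGroupType.
Implicit Type a : gT.

Definition expgz a (z : int) : gT := a ^+ `|(z %% #[a])%Z|%N.

Lemma expgzD a z1 z2 : expgz a (z1 + z2)%R = expgz a z1 * expgz a z2.
Proof.
rewrite /expgz -expgD -(expg_mod_order a (_ + _)%N) -[in LHS](expg_mod_order a).
congr (a ^+ _); have a_pos : (Posz #[a]) != 0%R by rewrite eqz_nat -lt0n order_gt0.
apply/eqP; rewrite -eqz_nat -!modz_nat PoszD !gez0_abs ?modz_ge0 //.
by rewrite modz_mod modzDm.
Qed.

Lemma expgz1 a : expgz a 1%R = a.
Proof. by rewrite /expgz modz_nat absz_nat expg_mod_order expg1. Qed.

Lemma expgz0 a : expgz a 0%R = 1.
Proof. by rewrite /expgz modz_nat absz_nat mod0n expg0. Qed.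

Lemma HomA_group : HomA (@mulg gT) = Z_Z2_gens gT.
Proof.
apply/setP => -[a b]; rewrite !inE /=; apply/asboolP/idP.
- case=> f [fM fa fb].
  have f0 : f (0%R, 0%R) = 1.
    by apply/esym/(mulgI (f (0%R, 0%R))); rewrite mulg1 -fM !addr0.
  have /esym fab : f (1%R, 1%R) = a * b by rewrite -fa -fb -fM addr0 add0r.
  have /esym fba : f (1%R, 1%R) = b * a by rewrite -fa -fb -fM addr0 add0r.
  have /esym fbb : f (0%R, (1 + 1)%R) = b * b by rewrite -fb -fM addr0.
  have Z2_char : (1 + 1 : 'Z_2)%R = 0%R by apply/val_inj.
  by rewrite fab fba fbb Z2_char f0 !eqxx.
- case/andP=> /eqP cab /eqP bb.
  exists (fun p => expgz a p.1 * b ^+ val p.2); split => /=.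
  + move=> a1 a2 b1 b2; rewrite expgzD.
    have -> : b ^+ val (b1 + b2)%R = b ^+ b1 * b ^+ b2.
      by rewrite -expgD /= (@expg_mod _ 2) // expgS expg1.
    rewrite !mulgA; congr (_ * _); rewrite -!mulgA; congr (_ * _).
    exact: commuteX2.
  + by rewrite expgz1 expg0 mulg1.
  + by rewrite expgz0 expg1 mul1g.
Qed.

End HomAGroup.

Lemma ord2_cases (i : 'I_2) : i = ord0 \/ i = ord_max.
Proof. by case: i => [[|[|]]] //= ?; [left|right]; apply/val_inj. Qed.

Lemma perm_ord1 (s : {perm 'I_1}) : s = 1.
Proof. by apply/permP => i; rewrite perm1 (ord1 (s i)) (ord1 i). Qed.

Definition swap2 : {perm 'I_2} := tperm ord0 ord_max.

Lemma swap2_neq1 : swap2 != 1.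
Proof. by apply/eqP => /permP/(_ ord0); rewrite tpermL perm1. Qed.

Lemma perm2_cases (s : {perm 'I_2}) : s = 1 \/ s = swap2.
Proof.
have s_inj : s ord_max != s ord0 by rewrite (inj_eq perm_inj).
case: (ord2_cases (s ord0)) => s0; [left|right]; apply/permP => i;
  case: (ord2_cases i) => ->; rewrite ?perm1 ?tpermL ?tpermR ?s0 //;
  by move: s_inj; rewrite s0; case: (ord2_cases (s ord_max)) => ->.
Qed.

Definition bool_of_ord2 (i : 'I_2) : bool := val i == 1%N.
Definition ord2_of_bool (b : bool) : 'I_2 := if b then ord_max else ord0.

Lemma bool_of_ord2K : cancel bool_of_ord2 ord2_of_bool.
Proof. by move=> i; case: (ord2_cases i) => ->. Qed.

Lemma ord2_of_boolK : cancel ord2_of_bool bool_of_ord2.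
Proof. by case. Qed.

Lemma bool_of_ord2M (i j : ('I_2 : finGroupType)) :
  bool_of_ord2 (i * j) = bool_of_ord2 i (+) bool_of_ord2 j.
Proof. by case: (ord2_cases i) => ->; case: (ord2_cases j) => ->. Qed.

Definition xorg : Type := bool.
HB.instance Definition _ := Finite.on xorg.

Lemma xorgA : associative (addb : xorg -> xorg -> xorg).
Proof. exact: addbA. Qed.
Lemma xorg1 : left_id (false : xorg) addb.
Proof. by case. Qed.
Lemma xorgV : left_inverse (false : xorg) id addb.
Proof. by case. Qed.
HB.instance Definition _ := Finite_isGroup.Build xorg xorgA xorg1 xorgV.

(* [(x0, x1, c)] stands for the element ([ffun i => x_i], swap2 ^+ c) of Z_2 wr S_2. *)
Definition Z2wrZ2 : Type := (bool * bool * bool)%type.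
HB.instance Definition _ := Finite.on Z2wrZ2.

Definition Z2wrZ2_mul (x y : Z2wrZ2) : Z2wrZ2 :=
  let: (x0, x1, c) := x in let: (y0, y1, d) := y in
  (x0 (+) (if c then y1 else y0), x1 (+) (if c then y0 else y1), c (+) d).
Definition Z2wrZ2_inv (x : Z2wrZ2) : Z2wrZ2 :=
  let: (x0, x1, c) := x in (if c then x1 else x0, if c then x0 else x1, c).

Lemma Z2wrZ2_mulA : associative Z2wrZ2_mul.
Proof. by move=> [[? ?] []] [[? ?] []] [[? ?] []] /=; rewrite ?addbA. Qed.
Lemma Z2wrZ2_mul1 : left_id (false, false, false) Z2wrZ2_mul.
Proof. by move=> [[? ?] []]. Qed.
Lemma Z2wrZ2_mulV : left_inverse (false, false, false) Z2wrZ2_inv Z2wrZ2_mul.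
Proof. by move=> [[[] []] []]. Qed.
HB.instance Definition _ :=
  Finite_isGroup.Build Z2wrZ2 Z2wrZ2_mulA Z2wrZ2_mul1 Z2wrZ2_mulV.

Lemma card_Z_Z2_gens (gT : finGroupType) : #|Z_Z2_gens gT| =
  \sum_(a : gT) \sum_(b : gT) (((a * b == b * a) && (b * b == 1))%g : nat).
Proof.
rewrite cardsE -sum1_card big_mkcond /= pair_big /=.
by apply: eq_bigr => -[a b] _; rewrite unfold_in /=; case: andP.
Qed.

Lemma big_bool3 (F : bool * bool * bool -> nat) :
  (\sum_(x : bool * bool * bool) F x =
   \sum_(a : bool) \sum_(b : bool) \sum_(c : bool) F (a, b, c))%N.
Proof. by rewrite pair_bigA /= pair_bigA /=; apply: eq_bigr => -[[]]. Qed.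

Lemma card_Z_Z2_gens_xorg : #|Z_Z2_gens (xorg : finGroupType)| = 4.
Proof. by rewrite card_Z_Z2_gens !big_bool. Qed.

Lemma card_Z_Z2_gens_Z2wrZ2 : #|Z_Z2_gens (Z2wrZ2 : finGroupType)| = 32.
Proof.
rewrite card_Z_Z2_gens big_bool3.
under eq_bigr do under eq_bigr do under eq_bigr do rewrite big_bool3.
by rewrite !big_bool.
Qed.

Lemma card_wreath (gT : finGroupType) n : #|{: wreath gT n}| = (#|gT| ^ n * n`!)%N.
Proof. by rewrite /wreath card_prod card_ffun card_ord card_Sn. Qed.

Lemma card_HomA_ord2 : #|HomA (@mulg ('I_2 : finGroupType))| = 4.
Proof.
rewrite (card_HomA_iso (mulU := @mulg xorg) _ _ bool_of_ord2K ord2_of_boolK) //.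
  by rewrite HomA_group card_Z_Z2_gens_xorg.
exact: bool_of_ord2M.
Qed.

Lemma card_HomA_wreath_ord2_1 : #|HomA (@wreath_mul ('I_2 : finGroupType) 1)| = 4.
Proof.
pose phi (x : wreath ('I_2 : finGroupType) 1) : xorg := bool_of_ord2 (x.1 ord0).
pose psi (b : xorg) : wreath ('I_2 : finGroupType) 1 := ([ffun=> ord2_of_bool b], 1).
rewrite (card_HomA_iso (mulU := @mulg xorg) phi psi).
- by rewrite HomA_group card_Z_Z2_gens_xorg.
- move=> [f s]; rewrite /phi /psi /= (perm_ord1 s); congr (_, _).
  by apply/ffunP => i; rewrite ffunE (ord1 i) bool_of_ord2K.
- by move=> b; rewrite /phi /psi /= ffunE ord2_of_boolK.
- move=> [f s] [g t]; rewrite /phi /= ffunE (perm_ord1 s) invg1 perm1.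
  exact: bool_of_ord2M.
Qed.

Lemma card_HomA_wreath_ord1_2 : #|HomA (@wreath_mul ('I_1 : finGroupType) 2)| = 4.
Proof.
pose phi (x : wreath ('I_1 : finGroupType) 2) : xorg := x.2 != 1.
pose psi (b : xorg) : wreath ('I_1 : finGroupType) 2 :=
  ([ffun=> ord0], if b then swap2 else 1).
rewrite (card_HomA_iso (mulU := @mulg xorg) phi psi).
- by rewrite HomA_group card_Z_Z2_gens_xorg.
- move=> [f s]; rewrite /phi /psi /=; congr (_, _).
    by apply/ffunP => i; rewrite ffunE (ord1 (f i)).
  by case: (perm2_cases s) => ->; rewrite ?eqxx ?swap2_neq1.
- by case; rewrite /phi /psi /= ?eqxx ?swap2_neq1.
- move=> [f s] [g t]; rewrite /phi /=.
  by case: (perm2_cases s) => ->; case: (perm2_cases t) => ->;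
    rewrite ?mulg1 ?mul1g ?tperm2 ?eqxx ?swap2_neq1.
Qed.

Lemma card_HomA_wreath_ord2_2 : #|HomA (@wreath_mul ('I_2 : finGroupType) 2)| = 32.
Proof.
pose phi (x : wreath ('I_2 : finGroupType) 2) : Z2wrZ2 :=
  (bool_of_ord2 (x.1 ord0), bool_of_ord2 (x.1 ord_max), x.2 != 1).
pose psi (x : Z2wrZ2) : wreath ('I_2 : finGroupType) 2 :=
  let: (x0, x1, c) := x in
  ([ffun i => ord2_of_bool (if i == ord0 then x0 else x1)], if c then swap2 else 1).
rewrite (card_HomA_iso (mulU := @mulg Z2wrZ2) phi psi).
- by rewrite HomA_group card_Z_Z2_gens_Z2wrZ2.
- move=> [f s]; rewrite /phi /psi /=; congr (_, _).
    apply/ffunP => i; rewrite ffunE.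
    by case: (ord2_cases i) => -> /=; rewrite bool_of_ord2K.
  by case: (perm2_cases s) => ->; rewrite ?eqxx ?swap2_neq1.
- by move=> [[x0 x1] []]; rewrite /phi /psi /= !ffunE /= !ord2_of_boolK ?eqxx ?swap2_neq1.
- move=> [f s] [g t]; rewrite /phi /= !ffunE.
  case: (perm2_cases s) => ->; case: (perm2_cases t) => ->;
  by rewrite ?invg1 ?tpermV ?perm1 ?tpermL ?tpermR ?mulg1 ?mul1g ?tperm2 ?eqxx
    ?swap2_neq1 !bool_of_ord2M.
Qed.

Local Open Scope ring_scope.

Lemma zetaAS (gT : finGroupType) n :
  zetaA gT n.+1 = #|HomA (@wreath_mul gT n.+1)|%:R / (#|gT| ^ n.+1 * n.+1`!)%N%:R.
Proof. by rewrite /zetaA /chiA_wreath /chiA_gen card_wreath. Qed.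

Lemma zetaA_ord1_1 : zetaA ('I_1 : finGroupType) 1 = 1.
Proof.
by rewrite zetaAS card_HomA_trivial ?card_ord // card_wreath card_ord.
Qed.

Lemma zetaA_ord1_2 : zetaA ('I_1 : finGroupType) 2 = 2.
Proof. by rewrite zetaAS card_HomA_wreath_ord1_2 card_ord. Qed.

Lemma zetaA_ord2_1 : zetaA ('I_2 : finGroupType) 1 = 2.
Proof. by rewrite zetaAS card_HomA_wreath_ord2_1 card_ord. Qed.

Lemma zetaA_ord2_2 : zetaA ('I_2 : finGroupType) 2 = 4.
Proof. by rewrite zetaAS card_HomA_wreath_ord2_2 card_ord. Qed.

Lemma chiA_ord1 : chiA ('I_1 : finGroupType) = 1.
Proof. by rewrite /chiA /chiA_gen card_HomA_trivial card_ord. Qed.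

Lemma chiA_ord2 : chiA ('I_2 : finGroupType) = 2.
Proof. by rewrite /chiA /chiA_gen card_HomA_ord2 card_ord. Qed.

Ltac fps_unfold :=
  rewrite /fps_powr /fps_exp /fps_log /fps_scale;
  do ![ progress rewrite /fps_mul /fps_nc /fps_one /=
      | (rewrite big_geq; last done)
      | (rewrite big_nat_recr; last done)
      | rewrite big_ord_recr | rewrite big_ord0 ];
  rewrite ?factS ?fact0 ?subn0 ?subn1 /=.

Lemma fps_powr_coef1 (f : fps) (c : rat) : fps_powr f c 1 = c * f 1%N.
Proof. by fps_unfold; field. Qed.

Lemma fps_powr_coef2 (f : fps) (c : rat) :
  fps_powr f c 2 = c * (f 2%N - f 1%N ^+ 2 / 2) + c ^+ 2 * f 1%N ^+ 2 / 2.
Proof. by fps_unfold; field. Qed.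

Theorem mainTheorem8 :
  [/\ [/\ zetaA ('I_1 : finGroupType) 0 = 1%R,
          zetaA ('I_1 : finGroupType) 1 = 1%R &
          zetaA ('I_1 : finGroupType) 2 = 2%R],
      [/\ zetaA ('I_2 : finGroupType) 0 = 1%R,
          zetaA ('I_2 : finGroupType) 1 = 2%R &
          zetaA ('I_2 : finGroupType) 2 = 4%R],
      chiA ('I_2 : finGroupType) = 2%R,
      zetaA ('I_2 : finGroupType)
        <> fps_powr (zetaA ('I_1 : finGroupType)) (chiA ('I_2 : finGroupType))
    & ~ (exists Z : fps, Z 0 = 1%R /\
           forall gT : finGroupType, zetaA gT = fps_powr Z (chiA gT))].
Proof.
have square_coef2 (f : fps) : f 1%N = 1 -> f 2%N = 2 -> fps_powr f 2 2 = 5.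
  by move=> f1 f2; rewrite fps_powr_coef2 f1 f2; field.
have zetaA_ord2_2_neq (f : fps) :
    f 1%N = 1 -> f 2%N = 2 -> zetaA ('I_2 : finGroupType) 2 <> fps_powr f 2 2.
  by move=> f1 f2; rewrite square_coef2 // zetaA_ord2_2.
split=> //.
- by rewrite zetaA_ord1_1 zetaA_ord1_2.
- by rewrite zetaA_ord2_1 zetaA_ord2_2.
- exact: chiA_ord2.
- by rewrite chiA_ord2 => /(congr1 (fun g : fps => g 2%N));
    apply: zetaA_ord2_2_neq; [exact: zetaA_ord1_1 | exact: zetaA_ord1_2].
- case=> Z [_ zetaAZ].
  have zeta1 := zetaAZ ('I_1 : finGroupType); rewrite chiA_ord1 in zeta1.
  have Z1 : Z 1%N = 1 by rewrite -zetaA_ord1_1 zeta1 fps_powr_coef1 mul1r.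
  have Z2 : Z 2%N = 2.
    by rewrite -zetaA_ord1_2 zeta1 fps_powr_coef2 Z1; field.
  by apply: (zetaA_ord2_2_neq Z Z1 Z2); rewrite zetaAZ chiA_ord2.
Qed.
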